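(* Let $\bm{w},\bm{v}$ be two unit vectors in $\mathbb{R}^d$ and $\bm{U}$ a linear subspace of $\mathbb{R}^d$, and assume that $\bm{w}$ and $\bm{v}$ do not both lie in $\bm{U}$. Then $\sin\theta(\mathrm{span}(\bm{U},\bm{w}),\mathrm{span}(\bm{U},\bm{v}))\le\frac{\sin\theta(\bm{w},\bm{v})}{\max\{\sin\theta(\bm{w},\bm{U}),\sin\theta(\bm{v},\bm{U})\}}$.
   Context: $\theta(\bm{x},\bm{y})$ is the angle between nonzero vectors; for a vector $\bm{x}$ and subspace $\bm{U}$, $\theta(\bm{x},\bm{U})=\min_{\bm{u}\in\bm{U}}\theta(\bm{x},\bm{u})$; for subspaces $\bm{U},\bm{V}$, $\theta(\bm{U},\bm{V})=\max_{\bm{u}\in\bm{U}}\theta(\bm{u},\bm{V})$. *)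

From HB Require Import structures.
From mathcomp Require Import all_boot all_order all_algebra.
From mathcomp Require Import all_classical all_reals all_analysis.
Set Implicit Arguments. Unset Strict Implicit. Unset Printing Implicit Defensive.
Import Order.TTheory GRing.Theory Num.Theory.
Local Open Scope classical_set_scope.
Local Open Scope ring_scope.

(* Vectors of R^d are row vectors 'rV[R]_d; a linear subspace of R^d is the
   row space of a matrix U : 'M[R]_d (membership: (u <= U)%MS). *)

Definition dotv {R : realType} {d : nat} (x y : 'rV[R]_d) : R := (x *m y^T) 0 0.
Definition normv {R : realType} {d : nat} (x : 'rV[R]_d) : R := Num.sqrt (dotv x x).

Definition vangle {R : realType} {d : nat} (x y : 'rV[R]_d) : R :=
  acos (dotv x y / (normv x * normv y)).

Definition nzvecs {R : realType} {d : nat} (U : 'M[R]_d) : set 'rV[R]_d :=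
  [set u | (u <= U)%MS /\ u != 0].

Definition vsangle {R : realType} {d : nat} (x : 'rV[R]_d) (U : 'M[R]_d) : R :=
  if \rank U == 0%N then pi / 2 else inf [set vangle x u | u in nzvecs U].

Definition ssangle {R : realType} {d : nat} (U V : 'M[R]_d) : R :=
  sup [set vsangle u V | u in nzvecs U].

From HB Require Import structures.
From mathcomp Require Import all_boot all_order all_algebra.
From mathcomp Require Import all_classical all_reals all_analysis.
From mathcomp Require Import ring.
Set Implicit Arguments. Unset Strict Implicit. Unset Printing Implicit Defensive.
Import Order.TTheory GRing.Theory Num.Theory.
Local Open Scope classical_set_scope.
Local Open Scope ring_scope.

(* Write [w'], [v'] for the components of [w], [v] orthogonal to [U], so that
   sin θ(w, U) = |w'| and sin θ(v, U) = |v'|.  A nonzero [x = u + a w] of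
   span(U, w) has distance |a| dist(w, span(U, v)) to span(U, v), while
   |x| >= |a| |w'|.  Now dist(w, span(U, v)) <= |w - <w,v> v| = sin θ(w, v),
   and computing the Gram determinant of [w'], [v'] in two ways gives the
   symmetric identity dist(w, span(U, v)) |v'| = dist(v, span(U, w)) |w'|.
   Hence dist(w, span(U, v)) max(|w'|, |v'|) <= sin θ(w, v) |w'|, so that
   sin θ(x, span(U, v)) <= sin θ(w, v) / max(|w'|, |v'|) for every such [x],
   and the bound passes to the supremum defining θ(span(U, w), span(U, v)). *)

Section InnerProduct.
Variables (R : realType) (d : nat).
Implicit Types (x y z : 'rV[R]_d) (a : R).

Lemma dotvE x y : dotv x y = \sum_j x 0 j * y 0 j.
Proof. by rewrite /dotv !mxE; apply: eq_bigr => j _; rewrite mxE. Qed.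

Lemma dotvC x y : dotv x y = dotv y x.
Proof. by rewrite !dotvE; apply: eq_bigr => j _; rewrite mulrC. Qed.

Lemma dotvDl x y z : dotv (x + y) z = dotv x z + dotv y z.
Proof. by rewrite /dotv mulmxDl mxE. Qed.

Lemma dotvZl a x y : dotv (a *: x) y = a * dotv x y.
Proof. by rewrite /dotv -scalemxAl mxE. Qed.

Lemma dotvBl x y z : dotv (x - y) z = dotv x z - dotv y z.
Proof. by rewrite dotvDl -scaleN1r dotvZl mulN1r. Qed.

Lemma dotvDr x y z : dotv x (y + z) = dotv x y + dotv x z.
Proof. by rewrite dotvC dotvDl !(dotvC x). Qed.

Lemma dotvZr a x y : dotv x (a *: y) = a * dotv x y.
Proof. by rewrite dotvC dotvZl dotvC. Qed.

Lemma dotvBr x y z : dotv x (y - z) = dotv x y - dotv x z.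
Proof. by rewrite dotvC dotvBl !(dotvC x). Qed.

Lemma dotv0l x : dotv 0 x = 0.
Proof. by rewrite -(scale0r 0) dotvZl mul0r. Qed.

Lemma dotv0r x : dotv x 0 = 0.
Proof. by rewrite dotvC dotv0l. Qed.

Lemma dotvv_ge0 x : 0 <= dotv x x.
Proof. by rewrite dotvE sumr_ge0 // => j _; rewrite -expr2 sqr_ge0. Qed.

Lemma dotvv_eq0 x : (dotv x x == 0) = (x == 0).
Proof.
apply/idP/eqP => [|->]; last by rewrite dotv0l.
rewrite dotvE psumr_eq0 => [/allP x0|j _]; last by rewrite -expr2 sqr_ge0.
apply/rowP => j; rewrite mxE.
by move: (x0 j (mem_index_enum j)); rewrite /= mulf_eq0 orbb => /eqP.
Qed.

Lemma normv_ge0 x : 0 <= normv x.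
Proof. exact: sqrtr_ge0. Qed.

Lemma normv_sqr x : normv x ^+ 2 = dotv x x.
Proof. by rewrite sqr_sqrtr // dotvv_ge0. Qed.

Lemma normv_eq0 x : (normv x == 0) = (x == 0).
Proof. by rewrite -dotvv_eq0 -normv_sqr sqrf_eq0. Qed.

Lemma normv_gt0 x : (0 < normv x) = (x != 0).
Proof. by rewrite lt_neqAle normv_ge0 andbT eq_sym normv_eq0. Qed.

Lemma normv0 : normv (0 : 'rV[R]_d) = 0.
Proof. by rewrite /normv dotv0l sqrtr0. Qed.

Lemma ler_normv_sqr x y : (normv x <= normv y) = (normv x ^+ 2 <= normv y ^+ 2).
Proof. by rewrite ler_sqr ?nnegrE ?normv_ge0. Qed.

Lemma normvZ a x : normv (a *: x) = `|a| * normv x.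
Proof. by rewrite /normv dotvZl dotvZr mulrA -expr2 sqrtrM ?sqr_ge0 // sqrtr_sqr. Qed.

Lemma normvD_orth x y : dotv x y = 0 ->
  normv (x + y) ^+ 2 = normv x ^+ 2 + normv y ^+ 2.
Proof.
by move=> xy; rewrite !normv_sqr !(dotvDl, dotvDr) xy dotvC xy addr0 add0r.
Qed.

Lemma dotv_sqr_le x y : dotv x y ^+ 2 <= dotv x x * dotv y y.
Proof.
have [/eqP|y0] := eqVneq (dotv y y) 0.
  by rewrite dotvv_eq0 => /eqP ->; rewrite !dotv0r mulr0 expr0n.
have y_gt0 : 0 < dotv y y by rewrite lt_neqAle eq_sym y0 dotvv_ge0.
rewrite -subr_ge0 -(pmulr_rge0 _ y_gt0).
have := dotvv_ge0 (dotv y y *: x - dotv x y *: y).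
by rewrite !(dotvBl, dotvBr, dotvZl, dotvZr) (dotvC y x); congr (_ <= _); ring.
Qed.

Lemma normr_dotv_le x y : `|dotv x y| <= normv x * normv y.
Proof.
rewrite -sqrtr_sqr -sqrtrM ?dotvv_ge0 // ler_sqrt ?mulr_ge0 ?dotvv_ge0 //.
exact: dotv_sqr_le.
Qed.

End InnerProduct.

Section OrthogonalProjection.
Variables (R : realType) (d : nat).
Implicit Types (U V : 'M[R]_d) (w x y z u : 'rV[R]_d) (a : R).

Definition orthv V z := forall u, (u <= V)%MS -> dotv z u = 0.

(* [B^T (B B^T)^-1 B] is the orthogonal projector onto the row space of [B];
   the rows of [B := row_base V] are independent, so [B B^T] is invertible. *)
Definition oproj V x :=
  let B := row_base V in x *m B^T *m invmx (B *m B^T) *m B.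

Definition perp V x := x - oproj V x.

Lemma row_base_gram_unit V : row_base V *m (row_base V)^T \in unitmx.
Proof.
rewrite -row_free_unit; apply/inj_row_free => z zG0.
have /eqP : dotv (z *m row_base V) (z *m row_base V) = 0.
  by rewrite /dotv trmx_mul mulmxA -(mulmxA z) zG0 mul0mx mxE.
by rewrite dotvv_eq0 mulmx_free_eq0 ?row_base_free // => /eqP.
Qed.

Lemma oproj_sub V x : (oproj V x <= V)%MS.
Proof. by rewrite -(eq_row_base V) submxMl. Qed.

Lemma perp_orthv V x : orthv V (perp V x).
Proof.
move=> u; rewrite -(eq_row_base V) => /submxP [c ->].
have perpB0 : perp V x *m (row_base V)^T = 0.
  by rewrite mulmxBl -[oproj V x *m _]mulmxA mulmxKV ?row_base_gram_unit ?subrr.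
by rewrite /dotv trmx_mul mulmxA perpB0 mul0mx mxE.
Qed.

Lemma perp_char V x z : (z <= V)%MS -> orthv V (x - z) -> perp V x = x - z.
Proof.
move=> zV xz_orth; set r := oproj V x - z.
have rV : (r <= V)%MS by rewrite addmx_sub ?eqmx_opp ?oproj_sub.
have /eqP : dotv r r = 0.
  have {1}-> : r = (x - z) - perp V x by apply/rowP => j; rewrite !mxE; ring.
  by rewrite dotvBl xz_orth // perp_orthv // subrr.
by rewrite dotvv_eq0 subr_eq0 => /eqP rz; rewrite /perp rz.
Qed.

Lemma perp_eq0 V x : (perp V x == 0) = (x <= V)%MS.
Proof.
apply/idP/idP => [|xV]; first by rewrite subr_eq0 => /eqP ->; exact: oproj_sub.
by rewrite (perp_char (x:=x) xV) ?subrr // => u _; rewrite dotv0l.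
Qed.

Lemma dotv_oproj V x u : (u <= V)%MS -> dotv x u = dotv (oproj V x) u.
Proof. by move=> uV; apply/eqP; rewrite -subr_eq0 -dotvBl perp_orthv. Qed.

Lemma normv_oproj_perp V x :
  normv x ^+ 2 = normv (oproj V x) ^+ 2 + normv (perp V x) ^+ 2.
Proof.
rewrite -normvD_orth; first by rewrite /perp addrCA subrr addr0.
by rewrite dotvC perp_orthv ?oproj_sub.
Qed.

Lemma normv_oproj_le V x : normv (oproj V x) <= normv x.
Proof.
by rewrite ler_normv_sqr (normv_oproj_perp V x) lerDl sqr_ge0.
Qed.

Lemma normv_perp_le V x : normv (perp V x) <= normv x.
Proof.
by rewrite ler_normv_sqr (normv_oproj_perp V x) lerDr sqr_ge0.
Qed.

Lemma normv_oproj_ratio_ge0_le1 V x : x != 0 ->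
  0 <= normv (oproj V x) / normv x <= 1.
Proof.
by move=> x0; rewrite divr_ge0 ?normv_ge0 // ler_pdivrMr ?normv_gt0 // mul1r normv_oproj_le.
Qed.

Lemma perp_min V x y : (y <= V)%MS -> normv (perp V x) <= normv (x - y).
Proof.
move=> yV; have orth : dotv (perp V x) (oproj V x - y) = 0.
  by rewrite perp_orthv // addmx_sub ?eqmx_opp ?oproj_sub.
have -> : x - y = perp V x + (oproj V x - y) by apply/rowP => j; rewrite !mxE; ring.
by rewrite ler_normv_sqr (normvD_orth orth) lerDl sqr_ge0.
Qed.

Lemma perp_addl V u w a : (u <= V)%MS -> perp V (u + a *: w) = a *: perp V w.
Proof.
move=> uV; set z := u + a *: oproj V w.
have zV : (z <= V)%MS by rewrite addmx_sub ?scalemx_sub ?oproj_sub.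
have xz : u + a *: w - z = a *: perp V w by apply/rowP => j; rewrite !mxE; ring.
have orth : orthv V (u + a *: w - z).
  by rewrite xz => v vV; rewrite dotvZl perp_orthv ?mulr0.
by rewrite (perp_char zV orth) xz.
Qed.

Lemma sub_addsmx_rV U w x :
  (x <= U + w)%MS -> exists u a, (u <= U)%MS /\ x = u + a *: w.
Proof.
move=> /sub_addsmxP [[c1 c2] /= ->].
have /sub_rVP [a ->] : (c2 *m w <= w)%MS by exact: submxMl.
by exists (c1 *m U), a; rewrite submxMl.
Qed.

Lemma orthv_adds U w z : orthv U z -> dotv z w = 0 -> orthv (U + w)%MS z.
Proof.
move=> zU zw _ /sub_addsmx_rV [u [a [uU ->]]].
by rewrite dotvDr dotvZr zw zU // mulr0 addr0.
Qed.

End OrthogonalProjection.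

Section Angles.
Variables (R : realType) (d : nat).
Implicit Types (V W : 'M[R]_d) (u v w x y : 'rV[R]_d).

Lemma ler_sin : {in `[- (pi / 2), pi / 2] &, {mono (@sin R) : x y / x <= y}}.
Proof. by apply: le_mono_in => x y hx hy; rewrite ltr_sin. Qed.

Lemma ler_acos : {in `[-1, 1] &, {mono (@acos R) : x y /~ x <= y}}.
Proof.
apply: le_nmono_in => x y hx hy xy.
have acos_itv (z : R) : z \in `[-1, 1] -> acos z \in `[0, pi].
  by rewrite !in_itv /= => hz; rewrite acos_ge0 ?acos_lepi.
by rewrite -(ltr_cos (acos_itv x hx) (acos_itv y hy)) (acosK hx) (acosK hy).
Qed.

Lemma vangleC x y : vangle x y = vangle y x.
Proof. by rewrite /vangle dotvC [normv x * _]mulrC. Qed.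

Lemma dotv_ratio_itv x y : x != 0 -> y != 0 ->
  dotv x y / (normv x * normv y) \in `[-1, 1].
Proof.
move=> x0 y0; have nxy : 0 < normv x * normv y by rewrite mulr_gt0 ?normv_gt0.
rewrite in_itv /= ler_pdivlMr // ler_pdivrMr // mulN1r mul1r -ler_norml.
exact: normr_dotv_le.
Qed.

Lemma sin_vangle_unit w v : normv w = 1 -> normv v = 1 ->
  sin (vangle w v) = normv (w - dotv w v *: v).
Proof.
move=> w1 v1; have ww : dotv w w = 1 by rewrite -normv_sqr w1 expr1n.
have vv : dotv v v = 1 by rewrite -normv_sqr v1 expr1n.
have c_itv : -1 <= dotv w v <= 1.
  by rewrite -ler_norml -[1](mulr1 1) -{1}w1 -v1 normr_dotv_le.
rewrite /vangle w1 v1 mulr1 divr1 sin_acos // /normv.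
by rewrite !(dotvBl, dotvBr, dotvZl, dotvZr) ww vv (dotvC v w); congr Num.sqrt; ring.
Qed.

Lemma vsangle_oproj V x : x != 0 ->
  vsangle x V = acos (normv (oproj V x) / normv x).
Proof.
move=> x0; have nx : 0 < normv x by rewrite normv_gt0.
set r := normv (oproj V x) / normv x.
have r_itv : r \in `[-1, 1].
  have /andP [r_ge0 r_le1] := normv_oproj_ratio_ge0_le1 V x0.
  by rewrite in_itv /= r_le1 andbT (le_trans _ r_ge0) ?lerN10.
rewrite /vsangle mxrank_eq0; have [V0|/rowV0Pn [u0 u0V u0_nz]] := eqVneq V 0.
  move: (oproj_sub V x); rewrite [in X in (_ <= X)%MS]V0 submx0 => /eqP.
  by rewrite /r => ->; rewrite normv0 mul0r acos0.
have ratio_le u : (u <= V)%MS -> u != 0 -> dotv x u / (normv x * normv u) <= r.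
  move=> uV u_nz; rewrite ler_pdivrMr ?mulr_gt0 ?normv_gt0 // mulrA divfK ?gt_eqF //.
  by rewrite (dotv_oproj x uV) (le_trans (ler_norm _)) ?normr_dotv_le.
have acos_r_lb : lbound [set vangle x u | u in nzvecs V] (acos r).
  move=> _ [u [uV u_nz] <-]; rewrite /vangle.
  by rewrite ler_acos ?dotv_ratio_itv ?ratio_le.
apply/le_anti/andP; split; last first.
  by apply: lb_le_inf => //; exists (vangle x u0), u0.
apply: ge_inf; first by exists (acos r).
have [Px0|Px_nz] := eqVneq (oproj V x) 0.
  exists u0 => //; congr acos.
  by rewrite /r (dotv_oproj x u0V) Px0 dotv0l normv0 !mul0r.
exists (oproj V x); first by split; rewrite ?oproj_sub.
rewrite /vangle (dotv_oproj x (oproj_sub V x)) -normv_sqr /r; congr acos.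
by field; rewrite !gt_eqF ?normv_gt0.
Qed.

Lemma vsangle_itv V x : x != 0 -> 0 <= vsangle x V <= pi / 2.
Proof.
move=> x0; rewrite vsangle_oproj //.
have /andP [r_ge0 r_le1] := normv_oproj_ratio_ge0_le1 V x0.
have r_itv : -1 <= normv (oproj V x) / normv x <= 1.
  by rewrite r_le1 andbT (le_trans _ r_ge0) ?lerN10.
by rewrite acos_ge0 // -acos0 ler_acos ?in_itv //= lerN10 ler01.
Qed.

Lemma sin_vsangle V x : x != 0 -> sin (vsangle x V) = normv (perp V x) / normv x.
Proof.
move=> x0; have /andP [r_ge0 r_le1] := normv_oproj_ratio_ge0_le1 V x0.
rewrite vsangle_oproj // sin_acos ?r_le1 ?(le_trans _ r_ge0) ?lerN10 //.
rewrite -[normv (perp V x) / _]ger0_norm ?divr_ge0 ?normv_ge0 // -sqrtr_sqr.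
congr Num.sqrt; apply/eqP; rewrite !expr_div_n subr_eq -mulrDl addrC.
by rewrite -normv_oproj_perp divff // sqrf_eq0 normv_eq0.
Qed.

Lemma sin_ssangle_le W V (b : R) : (exists x, nzvecs W x) ->
  (forall x, nzvecs W x -> sin (vsangle x V) <= b) -> sin (ssangle W V) <= b.
Proof.
move=> [x0 x0W] sin_le.
have in_pi2 (y : R) : 0 <= y <= pi / 2 -> y \in `[- (pi / 2), pi / 2].
  move=> /andP [y_ge0 y_le]; rewrite in_itv /= y_le andbT (le_trans _ y_ge0) //.
  by rewrite oppr_le0 divr_ge0 ?pi_ge0.
have b_ge0 : 0 <= b.
  apply: le_trans (sin_le _ x0W).
  by rewrite sin_vsangle ?divr_ge0 ?normv_ge0 //; case: x0W.
have [b_ge1|b_lt1] := lerP 1 b; first exact: le_trans (sin_le1 _) b_ge1.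
have b_itv : -1 <= b <= 1 by rewrite (le_trans _ b_ge0) ?lerN10 // ltW.
have b_in : b \in `[-1, 1] by rewrite in_itv.
have asin_in : asin b \in `[- (pi / 2), pi / 2].
  by rewrite in_itv /= asin_geNpi2 ?asin_lepi2.
have vs_le x : nzvecs W x -> vsangle x V <= asin b.
  move=> xW; have vs_in := in_pi2 _ (vsangle_itv V (proj2 xW)).
  by rewrite -(ler_sin vs_in asin_in) asinK ?sin_le.
have ss_le : ssangle W V <= asin b.
  by apply: ge_sup; [exists (vsangle x0 V), x0 | move=> _ [x xW <-]; exact: vs_le].
have ss_ge0 : 0 <= ssangle W V.
  have /andP [vs_ge0 _] := vsangle_itv V (proj2 x0W).
  apply: le_trans vs_ge0 (ub_le_sup _ _); last by exists x0.
  by exists (asin b) => _ [x xW <-]; exact: vs_le.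
have ss_in : ssangle W V \in `[- (pi / 2), pi / 2].
  apply: in_pi2; rewrite ss_ge0 /=.
  by move: asin_in; rewrite in_itv /= => /andP [_]; exact: le_trans ss_le.
by rewrite -[leRHS](asinK b_in) (ler_sin ss_in asin_in).
Qed.

End Angles.

Lemma dotv_perp_addsmx (R : realType) (d : nat) (U : 'M[R]_d) (w v : 'rV[R]_d) :
  dotv (perp (U + v)%MS w) (perp (U + v)%MS w) * dotv (perp U v) (perp U v) =
  dotv (perp U w) (perp U w) * dotv (perp U v) (perp U v)
    - dotv (perp U w) (perp U v) ^+ 2.
Proof.
set w' := perp U w; set v' := perp U v; set k := dotv w' v'; set b := dotv v' v'.
set t := k / b.
(* [t] is the junk value [k / 0 = 0] when [v' = 0], but then [k = 0] as well. *)
have tb : t * b = k.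
  have [/eqP|b_nz] := eqVneq b 0; last by rewrite divfK.
  by rewrite /b dotvv_eq0 => /eqP v'0; rewrite /t /k /b v'0 !dotv0r mulr0.
have eU : orthv U (w' - t *: v').
  by move=> u uU; rewrite dotvBl dotvZl !perp_orthv // mulr0 subr0.
have ev' : dotv (w' - t *: v') v' = 0 by rewrite dotvBl dotvZl -/k -/b tb subrr.
have eUv : orthv (U + v)%MS (w' - t *: v').
  refine (orthv_adds eU _); have v_dec : v = v' + oproj U v by rewrite subrK.
  by rewrite [in dotv _ v]v_dec dotvDr ev' eU ?oproj_sub // addr0.
have perp_w : perp (U + v)%MS w = w' - t *: v'.
  have w_dec : w' - t *: v' = w - (oproj U w + t *: v').
    by apply/rowP => j; rewrite !mxE; ring.
  rewrite w_dec; apply: perp_char; last by rewrite -w_dec.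
  have v'_sub : (v' <= U + v)%MS.
    by rewrite addmx_sub ?addsmxSr // eqmx_opp (submx_trans (oproj_sub U v)) ?addsmxSl.
  by rewrite addmx_sub ?scalemx_sub // (submx_trans (oproj_sub U w)) ?addsmxSl.
rewrite perp_w {1}dotvBr dotvZr ev' mulr0 subr0 dotvBl dotvZl (dotvC v' w') -/k -/b.
by rewrite mulrBl mulrAC tb expr2.
Qed.

Lemma normv_perp_addsmxC (R : realType) (d : nat) (U : 'M[R]_d) (w v : 'rV[R]_d) :
  normv (perp (U + v)%MS w) * normv (perp U v) =
  normv (perp (U + w)%MS v) * normv (perp U w).
Proof.
apply/eqP; rewrite -(eqrXn2 (_ : 0 < 2)%N) ?mulr_ge0 ?normv_ge0 //.
by rewrite !exprMn !normv_sqr !dotv_perp_addsmx (dotvC (perp U v)) mulrC.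
Qed.

Lemma normv_perp_addsmx_le_sin (R : realType) (d : nat) (U : 'M[R]_d) (w v : 'rV[R]_d) :
  normv w = 1 -> normv v = 1 -> normv (perp (U + v)%MS w) <= sin (vangle w v).
Proof. by move=> w1 v1; rewrite sin_vangle_unit // perp_min // scalemx_sub ?addsmxSr. Qed.

Section UnitVectors.
Variables (R : realType) (d : nat) (U : 'M[R]_d) (w v : 'rV[R]_d).
Hypotheses (w1 : normv w = 1) (v1 : normv v = 1).

Lemma normv_perp_addsmx_max_le :
  normv (perp (U + v)%MS w) * Num.max (normv (perp U w)) (normv (perp U v))
    <= sin (vangle w v) * normv (perp U w).
Proof.
rewrite maxr_pMr ?normv_ge0 // ge_max.
rewrite ler_wpM2r ?normv_ge0 ?normv_perp_addsmx_le_sin //=.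
by rewrite normv_perp_addsmxC ler_wpM2r ?normv_ge0 // vangleC normv_perp_addsmx_le_sin.
Qed.

Lemma sin_vsangle_addsmx_le x : nzvecs (U + w)%MS x ->
  sin (vsangle x (U + v)%MS) * Num.max (normv (perp U w)) (normv (perp U v))
    <= sin (vangle w v).
Proof.
move=> [/sub_addsmx_rV [u [a [uU ->]]] x0].
have sin_ge0 : 0 <= sin (vangle w v) by rewrite sin_vangle_unit // normv_ge0.
have a_perp_le : `|a| * normv (perp U w) <= normv (u + a *: w).
  by rewrite -normvZ -(perp_addl w a uU) normv_perp_le.
rewrite sin_vsangle // perp_addl ?(submx_trans uU) ?addsmxSl // normvZ.
rewrite mulrAC ler_pdivrMr ?normv_gt0 // (le_trans _ (ler_wpM2l sin_ge0 a_perp_le)) //.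
rewrite -mulrA [leRHS]mulrCA; apply: ler_wpM2l => //; exact: normv_perp_addsmx_max_le.
Qed.

End UnitVectors.

Theorem lemma10 (R : realType) (d : nat) (w v : 'rV[R]_d) (U : 'M[R]_d)
  (hw : normv w = 1) (hv : normv v = 1)
  (hnot : ~ ((w <= U)%MS /\ (v <= U)%MS)) :
  sin (ssangle (U + w)%MS (U + v)%MS) <=
    sin (vangle w v) / Num.max (sin (vsangle w U)) (sin (vsangle v U)).
Proof.
have w0 : w != 0 by rewrite -normv_gt0 hw.
have v0 : v != 0 by rewrite -normv_gt0 hv.
rewrite !sin_vsangle // hw hv !divr1.
have max_gt0 : 0 < Num.max (normv (perp U w)) (normv (perp U v)).
  rewrite lt_max !normv_gt0 !perp_eq0.
  by rewrite -negb_and; apply/negP => /andP.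
apply: sin_ssangle_le; first by exists w; split; rewrite ?addsmxSr.
by move=> x xUw; rewrite ler_pdivlMr // sin_vsangle_addsmx_le.
Qed.
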